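(* Let $p,q,r,s,t$ be parameters and let $(a_n)_{n\ge0}$ be defined by $a_0=1$, $a_1=p$, $a_2=q$ and, for $n\ge3$, $$a_n=r\,a_{n-1}+s\,a_{n-2}+t\sum_{k=1}^{n-3}a_ka_{n-k-2}.$$ Then the generating function $\sum_{n\ge0}a_nx^n$ equals $$\left(\frac{1-(r-p)x-(-q+pr+s-t)x^2}{1-rx-(s-2t)x^2},\ \frac{tx^2\bigl(1-(r-p)x-(-q+pr+s-t)x^2\bigr)}{(1-rx-(s-2t)x^2)^2}\right)\cdot c(x),$$ that is, $\frac{1-(r-p)x-(-q+pr+s-t)x^2}{1-rx-(s-2t)x^2}\,c\!\left(\frac{tx^2(1-(r-p)x-(-q+pr+s-t)x^2)}{(1-rx-(s-2t)x^2)^2}\right)$.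
   Context: $c(x)=\frac{1-\sqrt{1-4x}}{2x}$ is the generating function of the Catalan numbers. For power series $g(x)$ with $g(0)\neq0$ and $f(x)$ with $f(0)=0$, the Riordan array $(g,f)$ acts on a power series $h(x)$ by $(g,f)\cdot h(x)=g(x)h(f(x))$. *)

(* Formal power series over a commutative ring R are
   represented by their coefficient functions nat -> R. *)
From HB Require Import structures.
From mathcomp Require Import all_boot all_order all_algebra.
Set Implicit Arguments. Unset Strict Implicit. Unset Printing Implicit Defensive.
Import Order.TTheory GRing.Theory Num.Theory.
Local Open Scope ring_scope.

Section Series.
Variable R : comUnitRingType.

Definition ps (P : {poly R}) : nat -> R := fun n => P`_n.

Definition sone : nat -> R := fun n => (n == 0%N)%:R.

Definition smul (f g : nat -> R) : nat -> R :=
  fun n => \sum_(i < n.+1) f i * g (n - i)%N.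

Definition spow (f : nat -> R) (k : nat) : nat -> R := iter k (smul f) sone.

(* composition g(f(x)), meaningful when f 0 = 0 *)
Definition scomp (g f : nat -> R) : nat -> R :=
  fun n => \sum_(k < n.+1) g k * spow f k n.

(* multiplicative inverse of a series whose constant term is a unit:
   g_0 = f_0^-1, g_n = - f_0^-1 * sum_{i=1}^n f_i g_{n-i} *)
Fixpoint sinv_aux (f : nat -> R) (n : nat) : nat -> R :=
  match n with
  | 0 => fun m => if m == 0%N then (f 0%N)^-1 else 0
  | n'.+1 =>
      let g := sinv_aux f n' in
      fun m => if (m <= n')%N then g m
               else if m == n'.+1 then
                 - (f 0%N)^-1 * \sum_(i < n'.+1) f i.+1 * g (n' - i)%N
               else 0
  end.

Definition sinv (f : nat -> R) : nat -> R := fun n => sinv_aux f n n.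

(* Riordan array action: (g, f) . h = g(x) h(f(x)) *)
Definition riordan (g f h : nat -> R) : nat -> R := smul g (scomp h f).

End Series.

Definition catalan (n : nat) : nat := 'C(n.*2, n) %/ n.+1.
Definition catalan_gf (R : comUnitRingType) : nat -> R := fun n => (catalan n)%:R.

(* Both sides solve the quadratic  T y^2 - D y + N = 0,  where T = t x^2 and N / D is the
   first component of the Riordan array.  For the sequence this is its recurrence read
   off coefficientwise.  For the Riordan array y = (N/D) c(F) with F = T N / D^2 it follows
   from Segner's recurrence c = 1 + x c^2.  Solutions are unique: for two solutions A, B
   the difference A - B is annihilated by T (A + B) - D, whose constant term -D(0) is a unit.
   Power series are handled through their polynomial truncations below degree m. *)

From HB Require Import structures.
From mathcomp Require Import all_boot all_order all_algebra.
From mathcomp Require Import zify ring.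
From Stdlib Require Import Setoid Morphisms.
Set Implicit Arguments.
Unset Strict Implicit.
Unset Printing Implicit Defensive.
Import GRing.Theory.

Lemma catalan_mulS n : catalan n * n.+1 = 'C(n.*2, n).
Proof.
have Cn_eq : 'C(n.*2, n) = n.+1 * ('C(n.*2, n) - 'C(n.*2, n.+1)).
  by rewrite mulnBr mul_bin_left -addnn addnK mulSn addnK.
by rewrite /catalan {1}Cn_eq mulKn // mulnC -Cn_eq.
Qed.

Lemma catalan_recS n : n.+2 * catalan n.+1 = (4 * n + 2) * catalan n.
Proof.
apply/eqP; rewrite -(eqn_pmul2l (ltn0Sn n)) -(eqn_pmul2l (ltn0Sn n)); apply/eqP.
have bin_diag := mul_bin_diag (n.*2).+2 n.
have bin_down := mul_bin_down (n.*2).+1 n.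
rewrite /= -doubleS -catalan_mulS in bin_diag.
rewrite (_ : (n.*2).+1 - n = n.+1) in bin_down; last by lia.
rewrite [n.+2 * _]mulnC -bin_diag mulnCA -bin_down -catalan_mulS -!muln2.
ring.
Qed.

Lemma sum_convolution_sym (c f : nat -> nat) (M w : nat) :
  (forall i, i <= M -> f i + f (M - i) = w) ->
  2 * \sum_(i < M.+1) f i * (c i * c (M - i)) = w * \sum_(i < M.+1) c i * c (M - i).
Proof.
move=> fw; rewrite mul2n -addnn {2}(reindex_inj rev_ord_inj) -big_split big_distrr /=.
apply: eq_bigr => i _; have le_iM : i <= M by rewrite -ltnS.
by rewrite subSS subKn // [c (M - i) * _]mulnC -mulnDl fw.
Qed.

Lemma catalan_convolution n :
  \sum_(i < n.+1) catalan i * catalan (n - i) = catalan n.+1.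
Proof.
elim: n => [|n IHn]; first by rewrite big_ord1.
apply/eqP; rewrite -(eqn_pmul2l (ltn0Sn n.+2)) catalan_recS; apply/eqP.
rewrite -(@sum_convolution_sym _ (fun i => i.+1)); last by lia.
rewrite big_ord_recl /= mul1n subn0 mul1n.
under eq_bigr => i _ do rewrite /bump /= add1n subSS mulnA catalan_recS -mulnA.
have odd_weights : \sum_(i < n.+1) (4 * i + 2) * (catalan i * catalan (n - i)) =
                   2 * \sum_(i < n.+1) (2 * i + 1) * (catalan i * catalan (n - i)).
  by rewrite big_distrr; apply: eq_bigr => i _ /=; ring.
rewrite odd_weights (@sum_convolution_sym _ (fun i => 2 * i + 1) n n.*2.+2); last by lia.
rewrite IHn; lia.
Qed.

Local Open Scope ring_scope.

Section TruncatedSeries.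
Variable R : comUnitRingType.
Implicit Types (A B D E F N P Q T U : {poly R}) (f g h : nat -> R).

(* A record rather than a definition, so that ssreflect's rewrite uses eqmodX as a setoid
   relation instead of unfolding it into coefficient equations. *)
Record eqmodX m P Q : Prop :=
  EqmodX { eqmodXP : forall i, (i < m)%N -> P`_i = Q`_i }.

Instance eqmodX_equiv m : Equivalence (eqmodX m).
Proof.
by split=> [P | P Q [PQ] | P Q W [PQ] [QW]]; constructor=> i lt_im; rewrite ?PQ ?QW.
Qed.

Instance eqmodX_add m : Proper (eqmodX m ==> eqmodX m ==> eqmodX m) (@GRing.add {poly R}).
Proof. by move=> P P' [PP'] Q Q' [QQ']; constructor=> i lt_im; rewrite !coefD PP' ?QQ'. Qed.

Instance eqmodX_opp m : Proper (eqmodX m ==> eqmodX m) (@GRing.opp {poly R}).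
Proof. by move=> P P' [PP']; constructor=> i lt_im; rewrite !coefN PP'. Qed.

Instance eqmodX_mul m : Proper (eqmodX m ==> eqmodX m ==> eqmodX m) (@GRing.mul {poly R}).
Proof.
move=> P P' [PP'] Q Q' [QQ']; constructor=> i lt_im; rewrite !coefM; apply: eq_bigr => j _.
by rewrite PP' ?QQ' //; apply: leq_ltn_trans lt_im; rewrite ?leq_subr // -ltnS.
Qed.

Instance eqmodX_exp m : Proper (eqmodX m ==> eq ==> eqmodX m) (@GRing.exp {poly R}).
Proof.
move=> P P' PP' k _ <-; elim: k => [|k IHk]; first by rewrite !expr0.
by rewrite !exprS IHk PP'.
Qed.

Lemma eqmodX_subr0 m P Q : eqmodX m (P - Q) 0 -> eqmodX m P Q.
Proof.
by move=> [PQ]; constructor=> i /PQ /eqP; rewrite coefB coef0 subr_eq0 => /eqP.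
Qed.

Lemma coef_expr_lt P k j : P`_0 = 0 -> (j < k)%N -> (P ^+ k)`_j = 0.
Proof.
move=> P0; elim: k j => [|k IHk] j // lt_jk.
rewrite exprS coefM big1 // => -[[|i] lt_ij] _ /=; first by rewrite P0 mul0r.
by rewrite IHk ?mulr0 //; lia.
Qed.

Lemma eqmodX_comp m F P Q : F`_0 = 0 -> eqmodX m P Q -> eqmodX m (P \Po F) (Q \Po F).
Proof.
move=> F0 [PQ]; apply: eqmodX_subr0; constructor=> i lt_im.
have low_PQ : take_poly m (P - Q) = 0.
  apply/polyP => j; rewrite coef_take_poly coefB coef0.
  by case: ifP => // /PQ->; rewrite subrr.
rewrite -comp_polyB -(poly_take_drop m (P - Q)) low_PQ add0r comp_polyM comp_Xn_poly.
rewrite coefM coef0 big1 // => j _.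
by rewrite coef_expr_lt ?mulr0 //; apply: leq_ltn_trans lt_im; apply: leq_subr.
Qed.

Definition strunc m f : {poly R} := \poly_(i < m) f i.

Lemma coef_strunc m f i : (i < m)%N -> (strunc m f)`_i = f i.
Proof. by move=> lt_im; rewrite coef_poly lt_im. Qed.

Lemma strunc_ps m P : eqmodX m (strunc m (ps P)) P.
Proof. by constructor=> i /coef_strunc. Qed.

Lemma strunc_sone m : eqmodX m (strunc m (sone R)) 1.
Proof. by constructor=> i /coef_strunc->; rewrite coef1. Qed.

Lemma strunc_smul m f g : eqmodX m (strunc m (smul f g)) (strunc m f * strunc m g).
Proof.
constructor=> i lt_im; rewrite coef_strunc // coefM; apply: eq_bigr => j _.
by have lt_ji := ltn_ord j; rewrite !coef_strunc //; lia.
Qed.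

Lemma strunc_spow m f k : eqmodX m (strunc m (spow f k)) (strunc m f ^+ k).
Proof.
elim: k => [|k IHk]; first exact: strunc_sone.
by rewrite exprS /spow iterS strunc_smul -/(spow f k) IHk.
Qed.

Lemma strunc_scomp m h f : f 0%N = 0 ->
  eqmodX m (strunc m (scomp h f)) (strunc m h \Po strunc m f).
Proof.
move=> f0; constructor=> i lt_im.
have F0 : (strunc m f)`_0 = 0 by rewrite coef_strunc ?f0 //; lia.
have -> : strunc m h \Po strunc m f = \sum_(k < m) h k *: strunc m f ^+ k.
  rewrite {2}/strunc poly_def raddf_sum /=; apply: eq_bigr => k _.
  by rewrite comp_polyZ comp_Xn_poly.
rewrite coef_strunc // /scomp coef_sum (big_ord_widen m (fun k => h k * spow f k i)) //.
rewrite big_mkcond; apply: eq_bigr => k _; rewrite coefZ.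
case: ltnP => [lt_ki | lt_ik]; last by rewrite coef_expr_lt ?mulr0.
by rewrite -(eqmodXP (strunc_spow m f k)) // coef_strunc.
Qed.

Lemma sinv_aux_stable f n k : (k <= n)%N -> sinv_aux f n k = sinv f k.
Proof.
elim: n => [|n IHn] le_kn; first by move: le_kn; rewrite leqn0 => /eqP->.
have [le_kn' | lt_nk] := leqP k n; first by rewrite /= le_kn' IHn.
by have -> : k = n.+1 by apply/eqP; rewrite eqn_leq le_kn.
Qed.

Lemma sinvS f n :
  sinv f n.+1 = - (f 0%N)^-1 * \sum_(i < n.+1) f i.+1 * sinv f (n - i)%N.
Proof.
rewrite /sinv /= ltnn eqxx; congr (_ * _); apply: eq_bigr => i _.
by rewrite sinv_aux_stable // leq_subr.
Qed.

Lemma smul_sinv f n : f 0%N \is a GRing.unit -> smul f (sinv f) n = sone R n.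
Proof.
move=> f0_unit; case: n => [|n]; first by rewrite /smul big_ord1 /sinv /= mulrV.
rewrite /smul big_ord_recl subn0 sinvS mulrA mulrN mulrV // mulN1r.
by under [X in _ + X]eq_bigr => i _ do rewrite lift0 subSS; rewrite addNr.
Qed.

Lemma strunc_sinv m f : f 0%N \is a GRing.unit ->
  eqmodX m (strunc m f * strunc m (sinv f)) 1.
Proof.
move=> f0_unit; rewrite -strunc_smul -(strunc_sone m).
by constructor=> i lt_im; rewrite !coef_strunc // smul_sinv.
Qed.

Lemma eqmodX_inv m P : P`_0 \is a GRing.unit -> eqmodX m (P * strunc m (sinv (ps P))) 1.
Proof. by move=> P0_unit; rewrite -{1}(strunc_ps m P) strunc_sinv. Qed.

Lemma eqmodX_mul0_unit m U E :
  E`_0 \is a GRing.unit -> eqmodX m (U * E) 0 -> eqmodX m U 0.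
Proof.
move=> E0_unit UE0; rewrite -[U]mulr1 -(eqmodX_inv m E0_unit) mulrA UE0 mul0r.
reflexivity.
Qed.

Lemma eqmodX_quadratic_unique m T D N A B : T`_0 = 0 -> D`_0 \is a GRing.unit ->
  eqmodX m (T * A ^+ 2 - D * A + N) 0 -> eqmodX m (T * B ^+ 2 - D * B + N) 0 ->
  eqmodX m A B.
Proof.
move=> T0 D0_unit qA qB; apply: eqmodX_subr0.
have lead_unit : (T * (A + B) - D)`_0 \is a GRing.unit.
  by rewrite coefB coef0M T0 mul0r sub0r unitrN.
apply: (eqmodX_mul0_unit lead_unit).
have -> : (A - B) * (T * (A + B) - D) =
          (T * A ^+ 2 - D * A + N) - (T * B ^+ 2 - D * B + N) by ring.
by rewrite qA qB subrr.
Qed.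

Lemma strunc_catalan m :
  eqmodX m (strunc m (catalan_gf R)) (1 + 'X * strunc m (catalan_gf R) ^+ 2).
Proof.
constructor=> -[|i] lt_im; rewrite coefD coef1 coefXM coef_strunc //= ?addr0 // add0r.
rewrite expr2 -(eqmodXP (strunc_smul _ _ _)) ?coef_strunc; try lia.
rewrite /catalan_gf -catalan_convolution natr_sum; apply: eq_bigr => j _.
by rewrite natrM.
Qed.

Lemma strunc_catalan_comp m F : F`_0 = 0 ->
  let K := strunc m (catalan_gf R) \Po F in eqmodX m K (1 + F * K ^+ 2).
Proof.
move=> F0 K; rewrite {1}/K (eqmodX_comp F0 (strunc_catalan m)).
by rewrite rmorphD rmorph1 rmorphM rmorphXn /= comp_polyX.
Qed.

Lemma riordan_catalan_quadratic m T N D : T`_0 = 0 -> D`_0 \is a GRing.unit ->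
  let V := strunc m (riordan (smul (ps N) (sinv (ps D)))
                             (smul (ps (T * N)) (sinv (ps (D * D)))) (catalan_gf R)) in
  eqmodX m (T * V ^+ 2 - D * V + N) 0.
Proof.
move=> T0 D0_unit V.
set u := strunc m (sinv (ps D)); set w := strunc m (sinv (ps (D * D))).
set F := strunc m (smul (ps (T * N)) (sinv (ps (D * D)))).
have Du : eqmodX m (D * u) 1 by apply: eqmodX_inv.
have DDw : eqmodX m (D * D * w) 1 by apply: eqmodX_inv; rewrite coef0M unitrM D0_unit.
have w_u2 : eqmodX m w (u ^+ 2).
  rewrite -[w]mulr1 -(expr1n _ 2) -Du (_ : w * _ = D * D * w * u ^+ 2); last by ring.
  by rewrite DDw mul1r.
have F_eq : eqmodX m F (T * N * u ^+ 2) by rewrite /F strunc_smul strunc_ps -/w w_u2 mulrA.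
have f0 : smul (ps (T * N)) (sinv (ps (D * D))) 0%N = 0.
  by rewrite /smul big_ord1 /ps coef0M T0 !mul0r.
have F0 : F`_0 = 0 by rewrite coef_poly f0 if_same.
set K := strunc m (catalan_gf R) \Po F.
have V_eq : eqmodX m V (N * u * K).
  by rewrite /V /riordan strunc_smul strunc_smul strunc_ps (strunc_scomp _ _ f0).
rewrite V_eq (_ : _ - _ + N = N * (T * N * u ^+ 2 * K ^+ 2) - D * u * (N * K) + N);
  last by ring.
rewrite -F_eq Du (_ : _ - _ + N = N * ((1 + F * K ^+ 2) - K)); last by ring.
by rewrite -strunc_catalan_comp // subrr mulr0.
Qed.

Lemma smulS_split f g n :
  smul f g n.+1 =
  f 0%N * g n.+1 + \sum_(1 <= j < n.+1) f j * g (n.+1 - j)%N + f n.+1 * g 0%N.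
Proof.
rewrite /smul big_ord_recr big_ord_recl /= subnn subn0 big_add1 /= big_mkord.
by congr (_ + _ + _); apply: eq_bigr => j _; rewrite lift0.
Qed.

Lemma recurrence_quadratic (p q r s t : R) (a : nat -> R)
  (h0 : a 0%N = 1) (h1 : a 1%N = p) (h2 : a 2%N = q)
  (hrec : forall n : nat, (3 <= n)%N ->
     a n = r * a (n - 1)%N + s * a (n - 2)%N
           + t * \sum_(1 <= k < n - 2) a k * a (n - k - 2)%N) m :
  let A := strunc m a in
  let Np : {poly R} := 1 - (r - p)%:P * 'X - (- q + p * r + s - t)%:P * 'X^2 in
  let Dp : {poly R} := 1 - r%:P * 'X - (s - 2%:R * t)%:P * 'X^2 in
  eqmodX m (t%:P * 'X^2 * A ^+ 2 - Dp * A + Np) 0.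
Proof.
move=> A Np Dp; constructor=> i lt_im.
have coefA j : (j <= i)%N -> A`_j = a j.
  by move=> le_ji; rewrite coef_strunc // (leq_ltn_trans le_ji lt_im).
have coefA2 j : (j <= i)%N -> (A ^+ 2)`_j = smul a a j.
  move=> le_ji; have lt_jm := leq_ltn_trans le_ji lt_im.
  by rewrite expr2 -(eqmodXP (strunc_smul _ _ _)) ?coef_strunc.
rewrite /Np /Dp !mulrBl mul1r -!mulrA.
rewrite !(coefD, coefN, coefCM, coefXM, coefXnM, coefX, coef1, coef0).
case: i {lt_im} coefA coefA2 => [|[|[|k]]] coefA coefA2 /=.
- by rewrite coefA // h0; ring.
- by rewrite !coefA // h0 h1; ring.
- by rewrite coefA2 // !coefA // /smul big_ord1 h0 h1 h2; ring.
have shift : \sum_(1 <= j < k.+3 - 2) a j * a (k.+3 - j - 2)%N =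
             \sum_(1 <= j < k.+1) a j * a (k.+1 - j)%N.
  by apply: eq_big_nat => j _; congr (_ * a _); lia.
have sub2 : (k.+3 - 2 = k.+1)%N by [].
rewrite coefA2 ?coefA ?(hrec k.+3) ?smulS_split ?h0 ?shift ?subn1 ?sub2 //=; try lia.
ring.
Qed.

End TruncatedSeries.

Theorem mainTheorem6 (R : comUnitRingType) (p q r s t : R) (a : nat -> R)
  (h0 : a 0%N = 1) (h1 : a 1%N = p) (h2 : a 2%N = q)
  (hrec : forall n : nat, (3 <= n)%N ->
     a n = r * a (n - 1)%N + s * a (n - 2)%N
           + t * \sum_(1 <= k < n - 2) a k * a (n - k - 2)%N) :
  let Np : {poly R} := 1 - (r - p)%:P * 'X - (- q + p * r + s - t)%:P * 'X^2 in
  let Dp : {poly R} := 1 - r%:P * 'X - (s - 2%:R * t)%:P * 'X^2 in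
  forall n : nat,
    a n = riordan (smul (ps Np) (sinv (ps Dp)))
                  (smul (ps (t%:P * 'X^2 * Np)) (sinv (ps (Dp * Dp))))
                  (@catalan_gf R) n.
Proof.
move=> Np Dp n.
have T0 : (t%:P * 'X^2 : {poly R})`_0 = 0 by rewrite coefCM coefXn mulr0.
have D0_unit : Dp`_0 \is a GRing.unit.
  by rewrite !(coefB, coefCM, coefX, coefXn, coef1) /= !mulr0 !subr0 unitr1.
have [eq_coef] := eqmodX_quadratic_unique T0 D0_unit
  (recurrence_quadratic h0 h1 h2 hrec n.+1) (riordan_catalan_quadratic n.+1 Np T0 D0_unit).
by have := eq_coef n (ltnSn n); rewrite !coef_strunc.
Qed.
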